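(* Let $\mathbb{K}$ be an algebraically closed field of characteristic $0$ and $\alpha,\alpha'\in\mathbb{K}$. The down-up algebras $A(\alpha,0,0)$ and $A(\alpha',0,0)$ are isomorphic as $\mathbb{K}$-algebras if and only if $\alpha=\alpha'$.
   Context: For $(\alpha,\beta,\gamma)\in\mathbb{K}^3$, the down-up algebra $A(\alpha,\beta,\gamma)$ is the quotient of the free associative algebra $\mathbb{K}\langle d,u\rangle$ by the two-sided ideal generated by $d^2u-(\alpha dud+\beta ud^2+\gamma d)$ and $du^2-(\alpha udu+\beta u^2d+\gamma u)$. *)

From HB Require Import structures.
From mathcomp Require Import all_boot all_order all_algebra.
Set Implicit Arguments. Unset Strict Implicit. Unset Printing Implicit Defensive.
Import GRing.Theory.
Local Open Scope ring_scope.

(* Terms of the free unital associative K-algebra on two generators d, u: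
   generators, scalars (constants), sums and products. *)
Inductive term (K : Type) : Type :=
  | Gd : term K
  | Gu : term K
  | Cst : K -> term K
  | Add : term K -> term K -> term K
  | Mul : term K -> term K -> term K.
Arguments Gd {K}. Arguments Gu {K}.

(* [dueq a b c] is the congruence on terms whose quotient is the down-up
   algebra A(a,b,c) = K<d,u> / (d^2u - (a dud + b ud^2 + c d),
                                du^2 - (a udu + b u^2d + c u)). *)
Inductive dueq (K : fieldType) (a b c : K) : term K -> term K -> Prop :=
  | dq_refl t : dueq a b c t t
  | dq_sym s t : dueq a b c s t -> dueq a b c t s
  | dq_trans s t v : dueq a b c s t -> dueq a b c t v -> dueq a b c s v
  | dq_add s s' t t' : dueq a b c s s' -> dueq a b c t t' ->
      dueq a b c (Add s t) (Add s' t')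
  | dq_mul s s' t t' : dueq a b c s s' -> dueq a b c t t' ->
      dueq a b c (Mul s t) (Mul s' t')
  | dq_addA s t v : dueq a b c (Add s (Add t v)) (Add (Add s t) v)
  | dq_addC s t : dueq a b c (Add s t) (Add t s)
  | dq_add0 t : dueq a b c (Add (Cst 0) t) t
  | dq_mulA s t v : dueq a b c (Mul s (Mul t v)) (Mul (Mul s t) v)
  | dq_mul1l t : dueq a b c (Mul (Cst 1) t) t
  | dq_mul1r t : dueq a b c (Mul t (Cst 1)) t
  | dq_mul0l t : dueq a b c (Mul (Cst 0) t) (Cst 0)
  | dq_mulDl s t v : dueq a b c (Mul (Add s t) v) (Add (Mul s v) (Mul t v))
  | dq_mulDr s t v : dueq a b c (Mul s (Add t v)) (Add (Mul s t) (Mul s v))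
  | dq_cstD k l : dueq a b c (Add (Cst k) (Cst l)) (Cst (k + l))
  | dq_cstM k l : dueq a b c (Mul (Cst k) (Cst l)) (Cst (k * l))
  | dq_cstC k t : dueq a b c (Mul (Cst k) t) (Mul t (Cst k))
  | dq_rel1 : dueq a b c (Mul (Mul Gd Gd) Gu)
      (Add (Add (Mul (Cst a) (Mul (Mul Gd Gu) Gd))
                (Mul (Cst b) (Mul (Mul Gu Gd) Gd)))
           (Mul (Cst c) Gd))
  | dq_rel2 : dueq a b c (Mul (Mul Gd Gu) Gu)
      (Add (Add (Mul (Cst a) (Mul (Mul Gu Gd) Gu))
                (Mul (Cst b) (Mul (Mul Gu Gu) Gd)))
           (Mul (Cst c) Gu)).

Fixpoint subst (K : Type) (pd pu : term K) (t : term K) : term K :=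
  match t with
  | Gd => pd
  | Gu => pu
  | Cst k => Cst k
  | Add s v => Add (subst pd pu s) (subst pd pu v)
  | Mul s v => Mul (subst pd pu s) (subst pd pu v)
  end.

(* A(a,b,c) and A(a',b',c') are isomorphic as K-algebras: there are K-algebra
   morphisms f : A(a,b,c) -> A(a',b',c') and g : A(a',b',c') -> A(a,b,c)
   (every such morphism is induced by an endomorphism [subst] of K<d,u>
   compatible with the two congruences) which are mutually inverse. *)
Definition downup_isomorphic (K : fieldType) (a b c a' b' c' : K) : Prop :=
  exists pd pu qd qu : term K,
    [/\ (forall s t, dueq a b c s t ->
            dueq a' b' c' (subst pd pu s) (subst pd pu t)),
        (forall s t, dueq a' b' c' s t ->
            dueq a b c (subst qd qu s) (subst qd qu t)),
        (forall t, dueq a b c (subst qd qu (subst pd pu t)) t) &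
        (forall t, dueq a' b' c' (subst pd pu (subst qd qu t)) t)].

(* A K-algebra morphism f : A(a,0,0) -> A(a',0,0) pulls back representations
   (D, U) of A(a',0,0) in any K-algebra to representations of A(a,0,0).  In a
   commutative domain a representation of A(a,0,0) with a <> 1 lies on an axis
   D = 0 or U = 0, whereas every pair is a representation of A(1,0,0); pulling
   back the line through the images of (0,1) and (1,0) under the inverse of an
   isomorphism A(a,0,0) ~ A(1,0,0) therefore gives a contradiction.
   For a, a' <> 1, an isomorphism maps the generic point (X, 0) of the d-axis
   of A(a',0,0) linearly onto an axis of A(a,0,0).  Pulling back the triangular
   representations d |-> diag(x1, x2), u |-> E12, which exist exactly when
   x1 (x1 - a' x2) = 0, rules out the u-axis and yields a' (a' - a) = 0.  By
   symmetry a (a - a') = 0 as well, hence (a - a')^2 = 0. *)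

From HB Require Import structures.
From mathcomp Require Import all_boot all_order all_algebra.
From mathcomp Require Import ring.
Set Implicit Arguments. Unset Strict Implicit. Unset Printing Implicit Defensive.
Import GRing.Theory.
Local Open Scope ring_scope.

Section Representations.
Variable K : fieldType.

Fixpoint eval_term (A : algType K) (D U : A) (t : term K) : A :=
  match t with
  | Gd => D
  | Gu => U
  | Cst k => k%:A
  | Add s v => eval_term D U s + eval_term D U v
  | Mul s v => eval_term D U s * eval_term D U v
  end.

Definition downup_model (a b c : K) (A : algType K) (D U : A) : Prop :=
  D * D * U = a%:A * (D * U * D) + b%:A * (U * D * D) + c%:A * D /\
  D * U * U = a%:A * (U * D * U) + b%:A * (U * U * D) + c%:A * U.

Variable A : algType K.
Implicit Types (a b c : K) (D U : A) (s t : term K).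

Lemma eval_subst D U pd pu t :
  eval_term D U (subst pd pu t) = eval_term (eval_term D U pd) (eval_term D U pu) t.
Proof. by elim: t => //= s -> v ->. Qed.

Lemma eval_dueq a b c D U : downup_model a b c D U ->
  forall s t, dueq a b c s t -> eval_term D U s = eval_term D U t.
Proof.
case=> rel1 rel2 s t; elim=> //= *; try congruence.
- exact: addrA.
- exact: addrC.
- by rewrite scale0r add0r.
- exact: mulrA.
- by rewrite scale1r mul1r.
- by rewrite scale1r mulr1.
- by rewrite scale0r mul0r.
- exact: mulrDl.
- exact: mulrDr.
- by rewrite scalerDl.
- by rewrite mulr_algl scalerA.
- exact: comm_alg.
Qed.

Lemma downup_model_subst a b c a' b' c' pd pu D U :
  (forall s t, dueq a b c s t -> dueq a' b' c' (subst pd pu s) (subst pd pu t)) ->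
  downup_model a' b' c' D U ->
  downup_model a b c (eval_term D U pd) (eval_term D U pu).
Proof.
move=> hom model.
have := eval_dueq model (hom _ _ (dq_rel1 a b c)).
have := eval_dueq model (hom _ _ (dq_rel2 a b c)).
by rewrite !eval_subst.
Qed.

Lemma eval_substK a b c pd pu qd qu D U :
  (forall t, dueq a b c (subst qd qu (subst pd pu t)) t) ->
  downup_model a b c D U ->
  let D' := eval_term D U qd in let U' := eval_term D U qu in
  eval_term D' U' pd = D /\ eval_term D' U' pu = U.
Proof.
move=> inv model; split.
- by have := eval_dueq model (inv Gd); rewrite eval_subst.
- by have := eval_dueq model (inv Gu); rewrite eval_subst.
Qed.

Lemma downup_model_d_axis a b D : downup_model a b 0 D 0.
Proof. by split; rewrite !(mulr0, mul0r, scale0r, addr0). Qed.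

Lemma downup_model_u_axis a b U : downup_model a b 0 0 U.
Proof. by split; rewrite !(mulr0, mul0r, scale0r, addr0). Qed.

End Representations.

Lemma downup_model_one_comm (K : fieldType) (A : comAlgType K) (D U : A) :
  downup_model 1 0 0 D U.
Proof. by split; rewrite !scale0r !mul0r !addr0 scale1r mul1r; ring. Qed.

Lemma downup_model_comm_mul_eq0 (K : fieldType) (A : comAlgType K) (a : K) (D U : A) :
  a != 1 -> downup_model a 0 0 D U -> D * D * U = 0.
Proof.
move=> a_neq1 [rel1 _]; rewrite !scale0r !mul0r !addr0 in rel1.
have : (1 - a) *: (D * D * U) = 0.
  by rewrite scalerBl scale1r {1}rel1 mulr_algl mulrAC subrr.
by move/eqP; rewrite scaler_eq0 subr_eq0 eq_sym (negbTE a_neq1) => /eqP.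
Qed.

Lemma rmorph_eval_term (K : fieldType) (A B : algType K) (f : {rmorphism A -> B}) :
  (forall k : K, f k%:A = k%:A) ->
  forall D U t, f (eval_term D U t) = eval_term (f D) (f U) t.
Proof. by move=> f_alg D U; elim=> //= s IHs v IHv; rewrite (rmorphD, rmorphM) IHs IHv. Qed.

Section PolynomialRepresentations.
Variable K : fieldType.
Implicit Types (p q r : {poly K}) (t : term K).

Lemma downup_model_poly_axis (a : K) p q :
  a != 1 -> downup_model a 0 0 p q -> p = 0 \/ q = 0.
Proof.
move=> a_neq1 /(downup_model_comm_mul_eq0 a_neq1) /eqP.
by rewrite !mulf_eq0 orbb => /orP[] /eqP; [left | right].
Qed.

Lemma horner_eval_term (x : K) p q t :
  (eval_term p q t).[x] = eval_term (p.[x] : K^o) q.[x] t.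
Proof.
apply: (rmorph_eval_term (f := horner_eval x : {rmorphism _ -> K^o})) => k.
rewrite alg_polyC; exact: (etrans (hornerC k x) (esym (mulr1 k))).
Qed.

Lemma comp_poly_eval_term r p q t :
  eval_term p q t \Po r = eval_term (p \Po r) (q \Po r) t.
Proof.
apply: (rmorph_eval_term (f := comp_poly r : {rmorphism _ -> _})) => k.
by rewrite alg_polyC; exact: comp_polyC.
Qed.

Lemma horner_alg_eval_term (A : algType K) (M : A) p q t :
  horner_alg M (eval_term p q t) = eval_term (horner_alg M p) (horner_alg M q) t.
Proof.
apply: (rmorph_eval_term (f := horner_alg M : {rmorphism _ -> A})) => k.
by rewrite alg_polyC; exact: horner_algC.
Qed.

Lemma eval_term_d_axis_comp p t : eval_term p 0 t = eval_term 'X 0 t \Po p.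
Proof. by rewrite comp_poly_eval_term comp_polyX comp_poly0. Qed.

Lemma eval_term_u_axis_comp q t : eval_term 0 q t = eval_term 0 'X t \Po q.
Proof. by rewrite comp_poly_eval_term comp_polyX comp_poly0. Qed.

Lemma eval_term_d_axis (A : algType K) (M : A) t :
  eval_term M 0 t = horner_alg M (eval_term 'X 0 t).
Proof. by rewrite horner_alg_eval_term horner_algX rmorph0. Qed.

Lemma eval_term_u_axis (A : algType K) (M : A) t :
  eval_term 0 M t = horner_alg M (eval_term 0 'X t).
Proof. by rewrite horner_alg_eval_term horner_algX rmorph0. Qed.

Lemma comp_poly_eqX_eq0 r s p :
  r \Po p = 'X -> s \Po p = 0 -> size p = 2 /\ s = 0.
Proof.
move=> rpX sp0; have sp2 : size p = 2.
  have := size_comp_poly r p; rewrite rpX size_polyX => /esym/eqP.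
  by rewrite muln_eq1 => /andP[_ /eqP]; case: (size p) => [|[|[|]]].
by split=> //; apply/eqP; rewrite -(comp_poly2_eq0 _ sp2) sp0.
Qed.

Lemma horner_size2_root0 p x : size p = 2 -> p.[0] = 0 -> p.[x] = p`_1 * x.
Proof.
have horner2 y : size p = 2 -> p.[y] = p`_1 * y + p`_0.
  move=> sp; rewrite horner_coef sp !big_ord_recl big_ord0 /=.
  by rewrite expr0 expr1 mulr1 addr0 addrC.
by move=> sp; rewrite !horner2 // mulr0 add0r => ->; rewrite addr0.
Qed.

Lemma size2_coef1_neq0 p : size p = 2 -> p`_1 != 0.
Proof.
move=> sp; have : lead_coef p != 0 by rewrite lead_coef_eq0 -size_poly_eq0 sp.
by rewrite lead_coefE sp.
Qed.

End PolynomialRepresentations.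

Section UpperTriangular.
Variable K : fieldType.
Implicit Types (a b c d x y z : K).

Definition ut a x b : 'M[K]_2 :=
  \matrix_(i < 2, j < 2)
    if (i : nat) == 0%N then (if (j : nat) == 0%N then a else x)
    else (if (j : nat) == 0%N then 0 else b).

Lemma ut_add a x b a' x' b' :
  ut a x b + ut a' x' b' = ut (a + a') (x + x') (b + b').
Proof.
apply/matrixP=> i j; rewrite !mxE /=.
by case: i => [[|[|//]] ?]; case: j => [[|[|//]] ?] /=; ring.
Qed.

Lemma ut_mul a x b a' x' b' :
  ut a x b * ut a' x' b' = ut (a * a') (a * x' + x * b') (b * b').
Proof.
apply/matrixP=> i j; rewrite !mxE big_ord_recl big_ord1 !mxE /=.
by case: i => [[|[|//]] ?]; case: j => [[|[|//]] ?] /=; ring.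
Qed.

Lemma ut_alg k : k%:A = ut k 0 k.
Proof.
apply/matrixP=> i j; rewrite !mxE.
by case: i => [[|[|//]] ?]; case: j => [[|[|//]] ?]; rewrite /= ?mulr1 ?mulr0.
Qed.

Lemma ut_inj a x b a' x' b' :
  ut a x b = ut a' x' b' -> [/\ a = a', x = x' & b = b'].
Proof.
move=> eq_ut; have entry i j := congr1 (fun M : 'M[K]_2 => M i j) eq_ut.
have := entry ord0 ord0; have := entry ord0 ord_max.
by have := entry ord_max ord_max; rewrite !mxE.
Qed.

Lemma eval_ut a1 x a2 b1 y b2 t : exists z,
  eval_term (ut a1 x a2) (ut b1 y b2) t =
  ut (eval_term (a1 : K^o) b1 t) z (eval_term (a2 : K^o) b2 t).
Proof.
elim: t => /= [||k|s [z1 ->] v [z2 ->]|s [z1 ->] v [z2 ->]].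
- by exists x.
- by exists y.
- by exists 0; rewrite ut_alg (_ : k%:A = k :> K^o) //; exact: mulr1.
- by eexists; rewrite ut_add.
- by eexists; rewrite ut_mul.
Qed.

Lemma downup_model_ut_diag a x1 x2 :
  x1 * (x1 - a * x2) = 0 -> downup_model a 0 0 (ut x1 0 x2) (ut 0 1 0).
Proof.
move=> hx; split; rewrite !ut_alg !ut_mul !ut_add; congr ut; try ring.
by transitivity (x1 * (x1 - a * x2) + a * x1 * x2); [ring | rewrite hx; ring].
Qed.

Lemma downup_model_ut_d a d1 z d2 y :
  downup_model a 0 0 (ut d1 z d2) (ut 0 y 0) -> y * (d1 * (d1 - a * d2)) = 0.
Proof.
case=> rel1 _; rewrite !ut_alg !ut_mul !ut_add in rel1.
case/ut_inj: rel1 => _ /eqP; rewrite -subr_eq0 => /eqP rel1 _.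
by rewrite -[RHS]rel1; ring.
Qed.

Lemma downup_model_ut_u a z u1 y u2 :
  downup_model a 0 0 (ut 0 z 0) (ut u1 y u2) -> z * (u2 * (u2 - a * u1)) = 0.
Proof.
case=> _ rel2; rewrite !ut_alg !ut_mul !ut_add in rel2.
case/ut_inj: rel2 => _ /eqP; rewrite -subr_eq0 => /eqP rel2 _.
by rewrite -[RHS]rel2; ring.
Qed.

Lemma ut0 : ut 0 0 0 = 0.
Proof. by rewrite -ut_alg scale0r. Qed.

End UpperTriangular.

Section Epimorphism.
Variables (K : fieldType) (a a' : K) (pd pu qd qu : term K).
Hypotheses (a_neq1 : a != 1)
  (f_hom : forall s t, dueq a 0 0 s t -> dueq a' 0 0 (subst pd pu s) (subst pd pu t))
  (fgK : forall t, dueq a' 0 0 (subst pd pu (subst qd qu t)) t).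

Let P : {poly K} := eval_term 'X 0 pd.
Let Q : {poly K} := eval_term 'X 0 pu.

Let self_rel_eq0 (x : K) : x * (x - a * x) = 0 -> x = 0.
Proof.
rewrite -{2}[x]mul1r -mulrBl mulrCA => /eqP.
by rewrite mulf_eq0 subr_eq0 eq_sym (negbTE a_neq1) mulf_eq0 orbb => /eqP.
Qed.

Lemma pullback_d_axis : P = 0 \/ Q = 0.
Proof.
apply: downup_model_poly_axis a_neq1 _.
exact: downup_model_subst f_hom (downup_model_d_axis _ _ _).
Qed.

Lemma pullback_d_axisK : eval_term P Q qd = 'X /\ eval_term P Q qu = 0.
Proof. exact: eval_substK fgK (downup_model_d_axis _ _ _). Qed.

Lemma pullback_ut x1 x2 : x1 * (x1 - a' * x2) = 0 -> exists z y,
  downup_model a 0 0 (ut P.[x1] z P.[x2]) (ut Q.[x1] y Q.[x2]) /\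
  eval_term (ut P.[x1] z P.[x2]) (ut Q.[x1] y Q.[x2]) qu = ut 0 1 0.
Proof.
move=> hx; have model := downup_model_ut_diag hx.
have horner_d_axis t x : (eval_term 'X 0 t).[x] = eval_term (x : K^o) 0 t.
  by rewrite horner_eval_term hornerX horner0.
have [z ez] := eval_ut x1 0 x2 0 1 0 pd; have [y ey] := eval_ut x1 0 x2 0 1 0 pu.
exists z, y; rewrite !horner_d_axis -ez -ey; split.
- exact: downup_model_subst f_hom model.
- by case: (eval_substK fgK model).
Qed.

Lemma pullback_d_axis_into_d_axis : Q = 0 -> a' * (a' - a) = 0.
Proof.
move=> Q0; have [gd gu] := pullback_d_axisK.
rewrite Q0 eval_term_d_axis_comp in gd; rewrite Q0 eval_term_d_axis_comp in gu.
have [sP s0] := comp_poly_eqX_eq0 gd gu.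
have rel x1 x2 : x1 * (x1 - a' * x2) = 0 -> P.[x1] * (P.[x1] - a * P.[x2]) = 0.
  move=> hx; have [z [y [model back]]] := pullback_ut hx.
  rewrite Q0 !horner0 in model back.
  have y_neq0 : y != 0.
    apply/eqP=> y0; move: back.
    rewrite y0 ut0 eval_term_d_axis s0 rmorph0 -ut0.
    by case/ut_inj=> _ /esym/eqP; rewrite oner_eq0.
  by move/eqP: (downup_model_ut_d model); rewrite mulf_eq0 (negbTE y_neq0) => /eqP.
have linP x : P.[x] = P`_1 * x.
  by apply: horner_size2_root0 => //; apply: self_rel_eq0; apply: rel; rewrite !mul0r.
have := rel a' 1; rewrite !linP mulr1 subrr mulr0 => /(_ erefl) rel1.
have : P`_1 * P`_1 * (a' * (a' - a)) = 0 by rewrite -[RHS]rel1; ring.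
by move/eqP; rewrite mulf_eq0 mulf_eq0 orbb (negbTE (size2_coef1_neq0 sP)) => /eqP.
Qed.

Lemma pullback_d_axis_into_u_axis : P = 0 -> False.
Proof.
move=> P0; have [gd gu] := pullback_d_axisK.
rewrite P0 eval_term_u_axis_comp in gd; rewrite P0 eval_term_u_axis_comp in gu.
have [sQ s0] := comp_poly_eqX_eq0 gd gu.
have rel x1 x2 : x1 * (x1 - a' * x2) = 0 -> Q.[x2] * (Q.[x2] - a * Q.[x1]) = 0.
  move=> hx; have [z [y [model back]]] := pullback_ut hx.
  rewrite P0 !horner0 in model back.
  have z_neq0 : z != 0.
    apply/eqP=> z0; move: back.
    rewrite z0 ut0 eval_term_u_axis s0 rmorph0 -ut0.
    by case/ut_inj=> _ /esym/eqP; rewrite oner_eq0.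
  by move/eqP: (downup_model_ut_u model); rewrite mulf_eq0 (negbTE z_neq0) => /eqP.
have linQ x : Q.[x] = Q`_1 * x.
  by apply: horner_size2_root0 => //; apply: self_rel_eq0; apply: rel; rewrite !mul0r.
have := rel 0 1; rewrite !linQ !mulr1 !mulr0 subr0 mul0r => /(_ erefl) /eqP.
by rewrite mulf_eq0 orbb (negbTE (size2_coef1_neq0 sQ)).
Qed.

Lemma epi_downup_rel : a' * (a' - a) = 0.
Proof.
by case: pullback_d_axis => [/pullback_d_axis_into_u_axis | /pullback_d_axis_into_d_axis].
Qed.

End Epimorphism.

Section Isomorphisms.
Variable K : fieldType.
Implicit Types a b c : K.

Lemma downup_isomorphic_refl a b c : downup_isomorphic a b c a b c.
Proof.
have subst_id t : subst Gd Gu t = t by elim: t => //= s -> v ->.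
by exists Gd, Gu, Gd, Gu; split=> *; rewrite ?subst_id //; exact: dq_refl.
Qed.

Lemma downup_isomorphic_sym a b c a' b' c' :
  downup_isomorphic a b c a' b' c' -> downup_isomorphic a' b' c' a b c.
Proof. by case=> pd [pu [qd [qu [? ? ? ?]]]]; exists qd, qu, pd, pu. Qed.

Lemma downup_isomorphic_rel a a' :
  a != 1 -> downup_isomorphic a 0 0 a' 0 0 -> a' * (a' - a) = 0.
Proof. by move=> a_neq1 [pd [pu [qd [qu [f_hom _ _ fgK]]]]]; exact: epi_downup_rel fgK. Qed.

Lemma downup_not_isomorphic_one a : a != 1 -> ~ downup_isomorphic a 0 0 1 0 0.
Proof.
move=> a_neq1 [pd [pu [qd [qu [f_hom _ gfK _]]]]].
pose v t : K := eval_term (0 : K^o) 1 t; pose w t : K := eval_term (1 : K^o) 0 t.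
have [fv_d fv_u] := eval_substK gfK (downup_model_u_axis a 0 (1 : K^o)).
have [fw_d fw_u] := eval_substK gfK (downup_model_d_axis a 0 (1 : K^o)).
pose line t : {poly K} := (v t)%:P * (1 - 'X) + (w t)%:P * 'X.
have line0 t : (line t).[0] = v t by rewrite !hornerE; ring.
have line1 t : (line t).[1] = w t by rewrite !hornerE; ring.
have model := downup_model_one_comm (line qd) (line qu).
case: (downup_model_poly_axis a_neq1 (downup_model_subst f_hom model)).
- move/(congr1 (horner^~ 1)); rewrite /= horner_eval_term !line1 fw_d horner0.
  by move/eqP; rewrite oner_eq0.
- move/(congr1 (horner^~ 0)); rewrite /= horner_eval_term !line0 fv_u horner0.
  by move/eqP; rewrite oner_eq0.
Qed.

End Isomorphisms.

Theorem proposition1 (K : closedFieldType) (hK : [pchar K] =i pred0)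
    (alpha alpha' : K) :
  downup_isomorphic alpha 0 0 alpha' 0 0 <-> alpha = alpha'.
Proof.
split=> [iso|<-]; last exact: downup_isomorphic_refl.
have iso' := downup_isomorphic_sym iso.
have [a1|a_neq1] := eqVneq alpha 1; have [a'1|a'_neq1] := eqVneq alpha' 1.
- by rewrite a1 a'1.
- by case: (downup_not_isomorphic_one a'_neq1); rewrite -a1.
- by case: (downup_not_isomorphic_one a_neq1); rewrite -a'1.
have rel := downup_isomorphic_rel a_neq1 iso.
have rel' := downup_isomorphic_rel a'_neq1 iso'.
have : (alpha' - alpha) ^+ 2 = alpha' * (alpha' - alpha) + alpha * (alpha - alpha').
  by ring.
by rewrite rel rel' addr0 => /eqP; rewrite sqrf_eq0 subr_eq0 => /eqP.
Qed.
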